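(* Let $G\in\mathcal G^3_2$ and let $ab\in E(G)$ with $d(a)=d(b)=3$, such that $G-ab=A\cup B$ where $A,B$ are vertex-disjoint subgraphs with $a\in V(A)$, $b\in V(B)$. Let $\grave A$ be the subgraph of $G$ consisting of $A$, the vertex $b$ and the edge $ab$, and assume $v(\grave A)=6$ and $\lambda(\grave A)=2$. Let $z_1,z_2$ be the two neighbours of $b$ in $B$, and for $i=1,2$ let $x_iT_ib$ be a path with $bz_i\in E(T_i)$, with $e(T_i)\in\{2,3\}$, whose internal vertices have degree $2$ in $G$ and whose end $x_i\ne b$ has degree $3$ in $G$ (possibly $x_1=x_2$). Define $G'$ as follows. (a1.1) If $T_i=x_iz_ib$ for $i=1,2$ and $x_1\ne x_2$: $G'=G-(V(A)\cup\{b,z_1,z_2\})$. (a1.2) If $T_i=x_iz_ib$ for $i=1,2$ and $x_1=x_2$: $G'$ is obtained from $G-(V(A)\cup\{b\})$ by adding the edge $z_1z_2$. (a2.1) If $T_1=x_1y_1z_1b$, $T_2=x_2z_2b$ and $x_1\ne x_2$: $G'$ is obtained from $G-(V(A)\cup\{b,z_1,z_2\})$ by adding the edge $y_1x_2$. (a2.2) If $T_1=x_1y_1z_1b$, $T_2=x_2z_2b$ and $x_1=x_2$: $G'$ is obtained from $G-(V(A)\cup\{b,z_1\})$ by adding the edge $y_1z_2$. (a3) If $T_1=x_1y_1z_1b$ and $T_2=x_2y_2z_2b$: $G'$ is obtained from $G-(V(A)\cup\{b,z_1,z_2\})$ by adding the edge $y_1y_2$. Then $G'\in\mathcal G^3_2$,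 and $\lambda(G')\ge v(G')/4$ implies $\lambda(G)\ge v(G)/4$.
   Context: All graphs are finite and simple. For integers $1\le r\le s$, $\mathcal G^s_r$ denotes the set of graphs in which every vertex has degree at least $r$ and at most $s$. $d(x)$ is the degree of $x$ in $G$, $v(\cdot)$ and $e(\cdot)$ the numbers of vertices and edges. $\lambda(G)$ denotes the maximum number of pairwise vertex-disjoint subgraphs of $G$ each of which is a path with exactly two edges. *)

From mathcomp Require Import all_boot.
Set Implicit Arguments. Unset Strict Implicit. Unset Printing Implicit Defensive.

(* A graph on a finite ambient type T: a vertex set and an edge relation.
   Only edges between vertices of gV count (see adj). *)
Record sgraph (T : finType) := SGraph { gV : {set T}; gE : rel T }.

Section Graphs.
Variable T : finType.
Implicit Types (G : sgraph T) (x y : T).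

Definition adj G x y : bool := [&& x \in gV G, y \in gV G & gE G x y].

Definition simple G : Prop := symmetric (gE G) /\ irreflexive (gE G).

Definition deg G x : nat := #|[set y | adj G x y]|.

Definition inG32 G : Prop :=
  simple G /\ forall x, x \in gV G -> 2 <= deg G x <= 3.

Definition nv G : nat := #|gV G|.

Definition isP3 G (t : T * T * T) : bool :=
  let: (u, v, w) := t in
  [&& adj G u v, adj G v w, u != v, v != w & u != w].

Definition tverts (t : T * T * T) : {set T} :=
  let: (u, v, w) := t in [set u; v; w].

Definition packing G (S : {set T * T * T}) : bool :=
  [forall t in S, isP3 G t] &&
  [forall t1 in S, forall t2 in S, (t1 != t2) ==> [disjoint tverts t1 & tverts t2]].

Definition lam G : nat := \max_(S : {set T * T * T} | packing G S) #|S|.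

Definition subgraph H G : Prop :=
  gV H \subset gV G /\ forall x y, adj H x y -> adj G x y.

Definition delv G (X : {set T}) : sgraph T := SGraph (gV G :\: X) (gE G).

Definition adde G u v : sgraph T :=
  SGraph (gV G) (fun x y => [|| gE G x y, (x == u) && (y == v) | (x == v) && (y == u)]).

Definition short_path G x z b : bool :=
  [&& uniq [:: x; z; b], adj G x z, adj G z b, deg G z == 2 & deg G x == 3].

Definition long_path G x y z b : bool :=
  [&& uniq [:: x; y; z; b], adj G x y, adj G y z, adj G z b,
      deg G y == 2, deg G z == 2 & deg G x == 3].

End Graphs.

From mathcomp Require Import all_boot zify.
Set Implicit Arguments. Unset Strict Implicit. Unset Printing Implicit Defensive.

(* G' arises from G by deleting a set R containing V(A) and b, of at most eight vertices, and
   possibly joining two vertices s, t.  R is attached to the rest of G by just two edges, whose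
   outer ends have degree 3 or receive the new edge, so G' stays in G^3_2.  A maximum packing of G'
   transfers to G: only one of its paths can use st, and it is replaced by a two-edge path of G on
   its own vertices, possibly together with z1 or z2.  The six vertices of V(A) and b always carry two further disjoint
   two-edge paths, so lam G >= lam G' + 2 while v(G) <= v(G') + 8. *)

Section Neighbourhoods.
Variable T : finType.
Implicit Types (G H : sgraph T) (x y : T) (R : {set T}).

Definition nbrs G x : {set T} := [set y | adj G x y].

Lemma degE G x : deg G x = #|nbrs G x|.
Proof. by []. Qed.

Lemma in_nbrs G x y : (y \in nbrs G x) = adj G x y.
Proof. by rewrite inE. Qed.

Lemma adj_sym G x y : simple G -> adj G x y = adj G y x.
Proof. by case=> Gsym _; rewrite /adj Gsym andbCA. Qed.

Lemma adj_irr G x : simple G -> adj G x x = false.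
Proof. by case=> _ Girr; rewrite /adj Girr !andbF. Qed.

Lemma adj_neq G x y : simple G -> adj G x y -> x != y.
Proof. by move=> Gs; apply: contraTneq => ->; rewrite adj_irr. Qed.

Lemma deg_neq G x y m n : deg G x = m -> deg G y = n -> m != n -> x != y.
Proof. by move=> <- <-; apply: contraNneq => ->. Qed.

Lemma adj_inl G x y : adj G x y -> x \in gV G.
Proof. by case/and3P. Qed.

Lemma adj_inr G x y : adj G x y -> y \in gV G.
Proof. by case/and3P. Qed.

Lemma cards3 (p q r : T) :
  p != q -> p != r -> q != r -> #|[set p; q; r]| = 3.
Proof.
move=> pq pr qr; rewrite [_ :|: _]setUC cardsU1 cards2 pq !inE.
by rewrite ![r == _]eq_sym (negbTE pr) (negbTE qr).
Qed.

Lemma nbrs_eq G x (A : {set T}) : A \subset nbrs G x -> deg G x <= #|A| -> nbrs G x = A.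
Proof. by move=> sA dx; apply/eqP; rewrite eq_sym eqEcard sA. Qed.

Lemma nbrs2 G x p q : deg G x = 2 -> adj G x p -> adj G x q -> p != q ->
  nbrs G x = [set p; q].
Proof.
move=> dx xp xq pq; apply: nbrs_eq; last by rewrite dx cards2 pq.
by apply/subsetP => y /set2P[]->; rewrite in_nbrs.
Qed.

Lemma nbrs3 G x p q r : deg G x = 3 -> adj G x p -> adj G x q -> adj G x r ->
  p != q -> p != r -> q != r -> nbrs G x = [set p; q; r].
Proof.
move=> dx xp xq xr pq pr qr; apply: nbrs_eq; last by rewrite dx cards3.
by apply/subsetP => y; rewrite !inE -orbA => /or3P[]/eqP->.
Qed.

Lemma nbrs_delv G R x : x \in gV G :\: R -> nbrs (delv G R) x = nbrs G x :\: R.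
Proof.
rewrite inE => /andP[xR xG]; apply/setP => y.
by rewrite !inE /adj /= !inE xR xG; case: (y \in R); rewrite ?andbF.
Qed.

Lemma nbrs_adde H u v : u \in gV H -> v \in gV H ->
  nbrs (adde H u v) u = v |: nbrs H u.
Proof.
move=> uH vH; apply/setP => y; rewrite !inE /adj /= uH eqxx /=.
case: (eqVneq y v) => [->|yv]; first by rewrite vH orbT.
case: (eqVneq u v) => [uv|_] /=; last by rewrite orbF.
by rewrite uv (negbTE yv) orbF.
Qed.

Lemma nbrs_addeC H u v : nbrs (adde H u v) =1 nbrs (adde H v u).
Proof. by move=> x; apply/setP => y; rewrite !inE /adj /= (orbC ((x == u) && _)). Qed.

Lemma nbrs_adde_other H u v x : x != u -> x != v ->
  nbrs (adde H u v) x = nbrs H x.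
Proof.
by move=> xu xv; apply/setP => y; rewrite !inE /adj /= (negbTE xu) (negbTE xv) !orbF.
Qed.

Lemma simple_adde H u v : simple H -> u != v -> simple (adde H u v).
Proof.
case=> Hsym Hirr uv; split => [x y|x] /=.
  by rewrite Hsym (andbC (x == u)) (andbC (x == v)); congr orb; apply: orbC.
by rewrite Hirr /=; case: (eqVneq x u) => [->|]; rewrite ?(negbTE uv) ?andbF.
Qed.

Lemma deg_adde H u v : u \in gV H -> v \in gV H -> ~~ adj H u v ->
  deg (adde H u v) u = (deg H u).+1.
Proof. by move=> uH vH nuv; rewrite !degE nbrs_adde // cardsU1 in_nbrs nuv. Qed.

Lemma adj_delv G R x y : adj (delv G R) x y -> adj G x y.
Proof. by case/and3P => /setDP[xG _] /setDP[yG _] xy; apply/and3P. Qed.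

Lemma adj_adde_delv G R u v x y : adj (adde (delv G R) u v) x y ->
  adj G x y \/ (x, y) = (u, v) \/ (x, y) = (v, u).
Proof.
case/and3P => /setDP[xG _] /setDP[yG _] /or3P[xy|/andP[/eqP-> /eqP->]|/andP[/eqP-> /eqP->]].
- by left; apply/and3P.
- by right; left.
- by right; right.
Qed.

Lemma isP3_path G x y z : simple G -> adj G x y -> adj G y z -> x != z -> isP3 G (x, y, z).
Proof. by move=> Gs xy yz xz; apply/and5P; split; rewrite ?(adj_neq Gs xy) ?(adj_neq Gs yz). Qed.

Lemma short_pathP G x z w : simple G -> short_path G x z w ->
  [/\ [/\ x != z, x != w & z != w], adj G x z, nbrs G z = [set x; w], deg G z = 2
    & deg G x = 3].
Proof.
move=> Gs /and5P[]; rewrite /= !inE !negb_or !andbT => /andP[/andP[xz xw] zw] xz' zw' /eqP dz /eqP dx.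
by split => //; apply: nbrs2; rewrite // adj_sym.
Qed.

Lemma long_pathP G x y z w : simple G -> long_path G x y z w ->
  [/\ [/\ x != z, x != w, y != w & z != w],
      adj G x y, nbrs G y = [set x; z], nbrs G z = [set y; w]
    & [/\ deg G x = 3, deg G y = 2 & deg G z = 2]].
Proof.
move=> Gs /and5P[]; rewrite /= !inE !negb_or !andbT.
move=> /andP[/and3P[xy xz xw] /andP[/andP[yz yw] zw]] xy' yz' zw' /and3P[/eqP dy /eqP dz /eqP dx].
by split => //; apply: nbrs2; rewrite // adj_sym.
Qed.

End Neighbourhoods.

Section TwoEdgeCut.
Variables (T : finType) (G : sgraph T) (R : {set T}) (u p v q : T).
Hypotheses (G32 : inG32 G) (uR : u \notin R) (vR : v \notin R) (pR : p \in R) (qR : q \in R).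
Hypotheses (up : adj G u p) (vq : adj G v q) (uv : u != v).
Hypothesis cutR : forall x y, x \notin R -> y \in R -> adj G x y ->
  (x, y) = (u, p) \/ (x, y) = (v, q).

Lemma nbrs_cut x : x \notin R ->
  nbrs G x :&: R = if x == u then [set p] else if x == v then [set q] else set0.
Proof.
move=> xR; case: (eqVneq x u) => [->|xu]; last case: (eqVneq x v) => [->|xv];
  apply/setP => y; rewrite !inE.
- apply/andP/eqP => [[xy yR]|->]; last by [].
  by case: (cutR uR yR xy) => -[] // E _; move: uv; rewrite E eqxx.
- apply/andP/eqP => [[xy yR]|->]; last by [].
  by case: (cutR vR yR xy) => -[] // E _; move: uv; rewrite E eqxx.
- by apply/andP => -[xy yR]; case: (cutR xR yR xy) => -[] E _; rewrite E eqxx in xu xv.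
Qed.

Lemma deg_delv_cut x : x \in gV G :\: R ->
  deg (delv G R) x + ((x == u) || (x == v)) = deg G x.
Proof.
move=> xG'; have xR : x \notin R by case/setDP: xG'.
rewrite !degE nbrs_delv // -(cardsID R (nbrs G x)) nbrs_cut // addnC.
by case: (x == u); last case: (x == v); rewrite ?cards1 ?cards0.
Qed.

Lemma inG32_delv_cut : deg G u = 3 -> deg G v = 3 -> inG32 (delv G R).
Proof.
move=> du dv; split; first exact: G32.1.
move=> x xG'; have xG : x \in gV G by case/setDP: xG'.
have := deg_delv_cut xG'.
case: (eqVneq x u) => [->|xu] /=; first by rewrite du addn1 => -[->].
case: (eqVneq x v) => [->|xv] /=; first by rewrite dv addn1 => -[->].
by rewrite addn0 => ->; apply: G32.2.
Qed.

Lemma inG32_adde_delv_cut : ~~ adj G u v -> inG32 (adde (delv G R) u v).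
Proof.
move=> nuv; have [Gs Gdeg] := G32.
have uG' : u \in gV (delv G R) by rewrite /= inE uR (adj_inl up).
have vG' : v \in gV (delv G R) by rewrite /= inE vR (adj_inl vq).
have nuv' w w' : w \in gV G :\: R -> ~~ adj G w w' -> ~~ adj (delv G R) w w'.
  by move=> wG' nww'; rewrite -in_nbrs nbrs_delv // inE in_nbrs (negbTE nww') andbF.
split; first exact: simple_adde Gs uv.
move=> x xG'; have xG : x \in gV G by case/setDP: xG'.
suff -> : deg (adde (delv G R) u v) x = deg G x by apply: Gdeg.
have := deg_delv_cut xG'.
case: (eqVneq x u) => [->|xu] /=.
  by rewrite addn1 deg_adde ?nuv' // => ->.
case: (eqVneq x v) => [->|xv] /=.
  by rewrite addn1 [deg (adde _ _ _) _]degE nbrs_addeC -degE deg_adde ?nuv' 1?adj_sym // => ->.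
by rewrite addn0 [deg (adde _ _ _) _]degE nbrs_adde_other // -degE.
Qed.

End TwoEdgeCut.

Section Packings.
Variable T : finType.
Implicit Types (G H : sgraph T) (P : T * T * T) (S : {set T * T * T}).

Definition pverts S : {set T} := \bigcup_(P in S) tverts P.

Lemma packingP G S : reflect
  ((forall P, P \in S -> isP3 G P) /\
   (forall P1 P2, P1 \in S -> P2 \in S -> P1 != P2 -> [disjoint tverts P1 & tverts P2]))
  (packing G S).
Proof.
apply: (iffP andP) => [[/forall_inP S3 /forall_inP Sdis]|[S3 Sdis]]; split => //.
- by move=> P1 P2 /Sdis/forall_inP Sdis1 /Sdis1/implyP.
- exact/forall_inP.
- by apply/forall_inP => P1 P1S; apply/forall_inP => P2 P2S; apply/implyP; apply: Sdis.
Qed.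

Lemma P3_sub G P : isP3 G P -> tverts P \subset gV G.
Proof.
case: P => [[u v] w] /and5P[/and3P[uG vG _] /and3P[_ wG _] _ _ _].
by apply/subsetP => x; rewrite !inE -orbA => /or3P[]/eqP->.
Qed.

Lemma P3_third H P x y : simple H -> isP3 H P ->
  x \in tverts P -> y \in tverts P -> x != y ->
  exists m, [/\ m \in tverts P, m != x, m != y & adj H m x || adj H m y].
Proof.
move=> Hs; case: P => [[u v] w] /and5P[uv vw nuv nvw nuw]; rewrite !inE -!orbA.
have vu : adj H v u by rewrite adj_sym.
have wv : adj H w v by rewrite adj_sym.
move=> /or3P[]/eqP-> /or3P[]/eqP->; rewrite ?eqxx // => _;
  [exists w|exists v|exists w|exists u|exists v|exists u];
  by rewrite !inE !eqxx ?orbT ?uv ?vw ?vu ?wv ?orbT; split; rewrite // eq_sym.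
Qed.

Lemma pverts_sub G S : packing G S -> pverts S \subset gV G.
Proof. by case/packingP => S3 _; apply/bigcupsP => P /S3/P3_sub. Qed.

Lemma packing_sub G S S0 : S0 \subset S -> packing G S -> packing G S0.
Proof.
move=> /subsetP S0S /packingP[S3 Sdis]; apply/packingP.
by split => [P /S0S /S3|P1 P2 /S0S P1S /S0S /(Sdis _ _ P1S)].
Qed.

Lemma packingU1 G S P : packing G S -> isP3 G P -> [disjoint tverts P & pverts S] ->
  packing G (P |: S).
Proof.
move=> /packingP[S3 Sdis] P3 /bigcup_disjointP dP; apply/packingP; split.
  by move=> P1 /setU1P[->|/S3].
move=> P1 P2 /setU1P[->|P1S] /setU1P[->|P2S]; rewrite ?eqxx // => ne.
- exact: dP.
- by rewrite disjoint_sym; apply: dP.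
- exact: Sdis ne.
Qed.

Lemma card_packingU1 S P : [disjoint tverts P & pverts S] -> #|P |: S| = #|S|.+1.
Proof.
move=> /bigcup_disjointP dP; rewrite cardsU1; case: (boolP (P \in S)) => // PS.
have := dP P PS; rewrite -setI_eq0 setIid.
by case: P {dP PS} => [[u v] w] /eqP/setP/(_ u); rewrite !inE eqxx.
Qed.

Definition packing_transfer G H (F : {set T}) : Prop :=
  forall S, packing H S ->
    exists2 S0, packing G S0 & #|S0| = #|S| /\ pverts S0 \subset gV H :|: F.

Lemma packing_transfer_subgraph G H :
  (forall x y, adj H x y -> adj G x y) -> packing_transfer G H set0.
Proof.
move=> HG S pS; exists S; last by rewrite setU0 (pverts_sub pS).
case/packingP: pS => S3 Sdis; apply/packingP; split => // P /S3.
by case: P => [[u v] w] /and5P[/HG uv /HG vw *]; apply/and5P.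
Qed.

Lemma leq_lam G S : packing G S -> #|S| <= lam G.
Proof. by move=> pS; rewrite /lam (leq_bigmax_cond S pS). Qed.

Lemma lam_packing G : exists2 S, packing G S & #|S| = lam G.
Proof.
have : 0 < #|[pred S | packing G S]|.
  by apply/card_gt0P; exists set0; rewrite inE; apply/packingP; split => ?; rewrite inE.
by case/(eq_bigmax_cond (fun S => #|S|)) => S; rewrite inE => pS E; exists S; last exact: esym E.
Qed.

Lemma lam_add2 G S P1 P2 : packing G S -> isP3 G P1 -> isP3 G P2 ->
  [disjoint tverts P1 & tverts P2] ->
  [disjoint tverts P1 & pverts S] -> [disjoint tverts P2 & pverts S] ->
  #|S|.+2 <= lam G.
Proof.
move=> pS P1G P2G d12 d1S d2S.
have d1S2 : [disjoint tverts P1 & pverts (P2 |: S)].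
  apply/bigcup_disjointP => P /setU1P[->//|PS].
  by move/bigcup_disjointP: d1S; apply.
have := leq_lam (packingU1 (packingU1 pS P2G d2S) P1G d1S2).
by rewrite card_packingU1 // card_packingU1.
Qed.

Lemma nv_le_4lam G H R : gV H = gV G :\: R -> #|R| <= 8 -> (lam H).+2 <= lam G ->
  nv H <= 4 * lam H -> nv G <= 4 * lam G.
Proof.
move=> VH R8 lamHG nvH; rewrite /nv -(cardsID R (gV G)) -VH.
have : #|gV G :&: R| <= 8 by rewrite (leq_trans (subset_leq_card (subsetIr _ _))).
move: nvH lamHG; rewrite /nv; lia.
Qed.

End Packings.

Section NewEdge.
Variables (T : finType) (G H : sgraph T) (s t : T) (F : {set T}).
Hypotheses (Hs : simple H) (st : s != t).
Hypothesis adjH : forall x y, adj H x y -> adj G x y \/ (x, y) = (s, t) \/ (x, y) = (t, s).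

Lemma adj_transfer x y : adj H x y -> (x, y) != (s, t) -> (x, y) != (t, s) -> adj G x y.
Proof. by case/adjH => [//|[]->]; rewrite eqxx. Qed.

Lemma isP3_transfer P : isP3 H P -> ~~ ((s \in tverts P) && (t \in tverts P)) -> isP3 G P.
Proof.
case: P => [[u v] w] /and5P[uv vw nuv nvw nuw] stP; apply/and5P; split => //;
  apply: adj_transfer => //; apply: contraNneq stP => -[<- <-];
  by rewrite !inE !eqxx ?orbT.
Qed.

Lemma adj_transfer_other x y : x != s -> x != t -> adj H x y -> adj G x y.
Proof.
move=> xs xt /adj_transfer; apply.
  by apply: contra_neq xs => -[].
by apply: contra_neq xt => -[].
Qed.

Lemma packing_transfer_avoid S : packing H S ->
  {in S, forall P, ~~ ((s \in tverts P) && (t \in tverts P))} -> packing G S.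
Proof.
case/packingP => S3 Sdis avoid; apply/packingP; split => // P PS.
exact: isP3_transfer (S3 _ PS) (avoid _ PS).
Qed.

Hypothesis replace : forall m, m \in gV H -> m != s -> m != t -> adj G m s || adj G m t ->
  exists2 P, isP3 G P & tverts P \subset [set s; t; m] :|: F.
Hypothesis FH : [disjoint F & gV H].

Lemma packing_transfer_new_edge : packing_transfer G H F.
Proof.
(* Paths avoiding s or t are paths of G; the single path P0 through both is swapped. *)
move=> S pS; have [S3 Sdis] := packingP _ _ pS; have SH := pverts_sub pS.
case: (boolP [exists P0 in S, (s \in tverts P0) && (t \in tverts P0)]); last first.
  rewrite negb_exists_in => /forall_inP avoid; exists S; first exact: packing_transfer_avoid.
  by split; last exact: subset_trans SH (subsetUl _ _).
case/exists_inP => P0 P0S /andP[sP0 tP0].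
have [m [mP0 ms mt msmt]] := P3_third Hs (S3 _ P0S) sP0 tP0 st.
have mH : m \in gV H := subsetP (P3_sub (S3 _ P0S)) m mP0.
have [P1 P1G P1m] : exists2 P1, isP3 G P1 & tverts P1 \subset [set s; t; m] :|: F.
  apply: (replace mH ms mt).
  by case/orP: msmt => /(adj_transfer_other ms mt) ->; rewrite ?orbT.
have P1P0 : tverts P1 \subset tverts P0 :|: F.
  apply: subset_trans P1m (setSU _ _); apply/subsetP => x.
  by rewrite !inE -orbA => /or3P[]/eqP->.
have dP0 P : P \in S :\ P0 -> [disjoint tverts P0 & tverts P].
  by case/setD1P => PP0 PS; apply: Sdis; rewrite // eq_sym.
have pS1 : packing G (S :\ P0).
  apply: packing_transfer_avoid (packing_sub (subD1set S P0) pS) _ => P /dP0 dP.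
  by rewrite (disjointFr dP sP0).
have dP1 : [disjoint tverts P1 & pverts (S :\ P0)].
  apply/bigcup_disjointP => P PS1; apply: disjointWl P1P0 _.
  rewrite disjoints_subset subUset -!disjoints_subset dP0 //=.
  exact: disjointWr (P3_sub (S3 _ (subsetP (subD1set S P0) _ PS1))) FH.
exists (P1 |: (S :\ P0)); first exact: packingU1.
split; first by rewrite card_packingU1 // (cardsD1 P0 S) P0S.
apply/bigcupsP => P /setU1P[->|PS1].
  exact: subset_trans P1P0 (setSU _ (P3_sub (S3 _ P0S))).
exact: subset_trans (P3_sub (S3 _ (subsetP (subD1set S P0) _ PS1))) (subsetUl _ _).
Qed.

End NewEdge.

Section Replacement.
Variables (T : finType) (G H : sgraph T) (s t : T).
Hypothesis Gs : simple G.

Lemma replace_by_cut_edges p q : adj G s p -> adj G t q -> p \notin gV H -> q \notin gV H ->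
  forall m, m \in gV H -> m != s -> m != t -> adj G m s || adj G m t ->
    exists2 P, isP3 G P & tverts P \subset [set s; t; m] :|: [set p; q].
Proof.
move=> sp tq pH qH m mH _ _ /orP[ms|mt].
  exists (m, s, p); first by apply: isP3_path => //; apply: contraNneq pH => <-.
  by rewrite !subUset !sub1set !inE !eqxx ?orbT.
exists (m, t, q); first by apply: isP3_path => //; apply: contraNneq qH => <-.
by rewrite !subUset !sub1set !inE !eqxx ?orbT.
Qed.

Lemma replace_by_common_nbr x (F : {set T}) : adj G s x -> adj G x t -> s != t ->
  (forall m, m \in gV H -> adj G m s || adj G m t -> m = x) ->
  forall m, m \in gV H -> m != s -> m != t -> adj G m s || adj G m t ->
    exists2 P, isP3 G P & tverts P \subset [set s; t; m] :|: F.
Proof.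
move=> sx xt st onlyx m mH _ _ /(onlyx _ mH) ->.
exists (s, x, t); first exact: isP3_path.
by rewrite !subUset !sub1set !inE !eqxx ?orbT.
Qed.

End Replacement.

Section TwoDisjointP3.
Variables (T : finType) (G : sgraph T).
Hypothesis G32 : inG32 G.

Lemma P3_in_pair p q r s : p != q -> r != s ->
  {in [set r; s], forall x, nbrs G x \subset [set p; q] :|: [set r; s]} ->
  {in [set r; s], forall x, x \in gV G} ->
  exists2 n, n \in [set p; q] & exists2 P, isP3 G P & tverts P \subset [set r; s; n].
Proof.
move=> pq rs nbrsRS RSG; have [Gs Gdeg] := G32.
have rRS : r \in [set r; s] by rewrite !inE eqxx.
have in_pq x y : x \in [set r; s] -> adj G x y -> y != r -> y != s -> y \in [set p; q].
  move=> xRS xy yr ys.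
  have /setUP[//|/set2P[]/eqP] : y \in [set p; q] :|: [set r; s].
    by apply: (subsetP (nbrsRS _ xRS)); rewrite in_nbrs.
  - by rewrite (negbTE yr).
  - by rewrite (negbTE ys).
case: (boolP (adj G r s)) => [adj_rs|nadj_rs].
  have [n rn ns] : exists2 n, adj G r n & n != s.
    have /card_gt1P[n1 [n2 [rn1 rn2 n12]]] : 1 < #|nbrs G r| by case/andP: (Gdeg r (RSG r rRS)).
    rewrite !in_nbrs in rn1 rn2.
    case: (eqVneq n1 s) => [n1s|]; last by exists n1.
    by exists n2; rewrite // -n1s eq_sym.
  exists n; first by apply: (in_pq _ _ rRS rn _ ns); rewrite eq_sym (adj_neq Gs rn).
  have sr : adj G s r by rewrite adj_sym.
  exists (s, r, n); first by apply: (isP3_path Gs sr rn); rewrite eq_sym.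
  by rewrite !subUset !sub1set !inE !eqxx ?orbT.
have adj_p x : x \in [set r; s] -> ~~ adj G x r -> ~~ adj G x s -> adj G x p.
  move=> xRS nxr nxs; rewrite -in_nbrs.
  suff /eqP-> : nbrs G x == [set p; q] by rewrite !inE eqxx.
  rewrite eqEcard cards2 pq; case/andP: (Gdeg x (RSG x xRS)) => -> _; rewrite andbT.
  apply/subsetP => y; rewrite in_nbrs => xy; apply: (in_pq _ _ xRS xy).
    by apply: contraNneq nxr => <-.
  by apply: contraNneq nxs => <-.
have rp : adj G r p by apply: adj_p; rewrite ?adj_irr.
have sp : adj G s p by apply: adj_p; rewrite ?adj_irr ?inE ?eqxx ?orbT // adj_sym.
exists p; first by rewrite !inE eqxx.
have ps : adj G p s by rewrite adj_sym.
exists (r, p, s); first exact: isP3_path.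
by rewrite !subUset !sub1set !inE !eqxx ?orbT.
Qed.

Variables (V : {set T}) (a b : T).
Hypotheses (VG : V \subset gV G) (cardV : #|V| = 5) (aV : a \in V) (bV : b \notin V).
Hypotheses (da : deg G a = 3) (ab : adj G a b).
Hypothesis nbrsV : {in V, forall w, nbrs G w \subset b |: V}.
Hypothesis adj_Vb : {in V, forall w, adj G w b -> w = a}.

Lemma nbrs_far x : x \in V -> x != a -> ~~ adj G a x -> nbrs G x \subset V :\ a.
Proof.
move=> xV xa nax; apply/subsetP => y; rewrite in_nbrs => xy.
have /setU1P[yb|yV] : y \in b |: V by apply: (subsetP (nbrsV xV)); rewrite in_nbrs.
  by move: xy; rewrite yb => /(adj_Vb xV) xa'; rewrite xa' eqxx in xa.
rewrite !inE yV andbT; apply: contraNneq nax => <-.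
by rewrite adj_sym //; case: G32.
Qed.

Lemma two_disjoint_P3 : exists P1 P2, [/\ isP3 G P1, isP3 G P2,
  [disjoint tverts P1 & tverts P2], tverts P1 \subset b |: V & tverts P2 \subset b |: V].
Proof.
(* With N(a) = {b, p, q} and V = {a, p, q, r, s}: a path on r, s and one of p, q, then b-a-o. *)
have Gs := G32.1.
have /cards2P[p [q [pq Na]]] : #|nbrs G a :\ b| == 2.
  by move: da; rewrite degE (cardsD1 b) in_nbrs ab add1n => -[->].
have PQ x : x \in [set p; q] -> [/\ adj G a x, x != b & x \in V].
  rewrite -Na => /setD1P[xb]; rewrite in_nbrs => ax; split => //.
  by have := subsetP (nbrsV aV) x; rewrite in_nbrs ax !inE (negbTE xb); apply.
have aPQ : a \notin [set p; q] by apply/negP => /PQ[]; rewrite adj_irr.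
have /cards2P[r [s [rs Rs]]] : #|V :\: [set a; p; q]| == 2.
  have [[_ _ pV] [_ _ qV]] := (PQ p (set21 p q), PQ q (set22 p q)).
  rewrite cardsD cardV (setIidPr _) ?cards3 //; last by rewrite !subUset !sub1set aV pV qV.
    by apply: contraNneq aPQ => ->; rewrite set21.
  by apply: contraNneq aPQ => ->; rewrite set22.
have RS x : x \in [set r; s] -> [/\ x \in V, x != a & x \notin [set p; q]].
  by rewrite -Rs !inE !negb_or => /andP[/andP[/andP[-> ->] ->] ->].
have nbrsRS : {in [set r; s], forall x, nbrs G x \subset [set p; q] :|: [set r; s]}.
  move=> x /RS[xV xa xPQ]; apply: subset_trans (nbrs_far xV xa _) _.
    by apply: contra xPQ => ax; rewrite -Na !inE ax andbT; apply: contraNneq bV => <-.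
  apply/subsetP => y /setD1P[ya yV]; rewrite -Rs !inE yV (negbTE ya) /= andbT.
  by rewrite orbN.
have RSG : {in [set r; s], forall x, x \in gV G}.
  by move=> x /RS[xV _ _]; apply: (subsetP VG).
have [n nPQ [P1 P1G P1RS]] := P3_in_pair pq rs nbrsRS RSG.
have [o oPQ on] : exists2 o, o \in [set p; q] & o != n.
  by case/set2P: nPQ => ->; [exists q|exists p]; rewrite ?inE ?eqxx ?orbT // eq_sym.
have [[ao ob oV] [_ _ nV]] := (PQ o oPQ, PQ n nPQ).
have [[rV ra rPQ] [sV sa sPQ]] := (RS r (set21 r s), RS s (set22 r s)).
have RSnV : [set r; s; n] \subset V by rewrite !subUset !sub1set rV sV nV.
exists P1, (b, a, o); split => //.
- by apply: isP3_path; rewrite // 1?adj_sym // eq_sym.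
- rewrite disjoint_sym; apply: (disjointWr P1RS).
  rewrite disjoints_subset !subUset !sub1set !in_setC (contra (subsetP RSnV b) bV).
  have notPQ x y : x \in [set p; q] -> y \notin [set p; q] -> x != y.
    by move=> xPQ; apply: contraNneq => <-.
  rewrite !inE !negb_or !(eq_sym a) ra sa (notPQ _ _ nPQ aPQ).
  by rewrite (notPQ _ _ oPQ rPQ) (notPQ _ _ oPQ sPQ) on.
- exact: subset_trans P1RS (subset_trans RSnV (subsetUr _ _)).
- by rewrite !subUset !sub1set !in_setU1 eqxx aV oV !orbT.
Qed.

End TwoDisjointP3.

Section Reduction.
Variables (T : finType) (G : sgraph T) (VA : {set T}) (a b z1 z2 : T).
Hypotheses (G32 : inG32 G) (VAG : VA \subset gV G) (cardVA : #|VA| = 5).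
Hypotheses (aVA : a \in VA) (bVA : b \notin VA) (z1VA : z1 \notin VA) (z2VA : z2 \notin VA).
Hypotheses (da : deg G a = 3) (z12 : z1 != z2).
Hypothesis nbrs_b : nbrs G b = [set a; z1; z2].
Hypothesis nbrsVA : {in VA, forall w, nbrs G w \subset b |: VA}.

Definition sound_reduction (G' : sgraph T) : Prop :=
  inG32 G' /\ (nv G' <= 4 * lam G' -> nv G <= 4 * lam G).

Let Gs : simple G := G32.1.

Lemma adj_b x : adj G b x = (x \in [set a; z1; z2]).
Proof. by rewrite -in_nbrs nbrs_b. Qed.

Lemma bz1 : adj G b z1. Proof. by rewrite adj_b !inE eqxx orbT. Qed.
Lemma bz2 : adj G b z2. Proof. by rewrite adj_b !inE eqxx !orbT. Qed.

Lemma z1_out : z1 \notin b |: VA.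
Proof. by rewrite !inE negb_or z1VA andbT eq_sym (adj_neq Gs bz1). Qed.

Lemma z2_out : z2 \notin b |: VA.
Proof. by rewrite !inE negb_or z2VA andbT eq_sym (adj_neq Gs bz2). Qed.

Lemma adj_VA_b w : w \in VA -> adj G w b -> w = a.
Proof.
move=> wVA; rewrite adj_sym // adj_b !inE -orbA => /or3P[]/eqP // wz.
  by move: z1VA; rewrite -wz wVA.
by move: z2VA; rewrite -wz wVA.
Qed.

Lemma notin_VA x y : x \notin b |: VA -> adj G x y -> y \notin VA.
Proof.
move=> xbVA xy; apply: contra xbVA => yVA; apply: (subsetP (nbrsVA yVA)).
by rewrite in_nbrs adj_sym.
Qed.

Lemma lam_reduction G' (X F : {set T}) : gV G' = gV G :\: (VA :|: X) ->
  b \in X -> X \subset [set b; z1; z2] -> F \subset [set z1; z2] ->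
  packing_transfer G G' F -> nv G' <= 4 * lam G' -> nv G <= 4 * lam G.
Proof.
move=> VG' bX Xb F12 transfer; apply: (nv_le_4lam VG').
  rewrite (leq_trans (leq_card_setU _ _)) // cardVA -[8]/(5 + 3) leq_add2l.
  rewrite (leq_trans (subset_leq_card Xb)) // cards3 // ?(adj_neq Gs bz1) ?(adj_neq Gs bz2) //.
have ab : adj G a b by rewrite adj_sym // adj_b !inE eqxx.
have [P1 [P2 [P1G P2G d12 P1b P2b]]] :=
  two_disjoint_P3 G32 VAG cardVA aVA bVA da ab nbrsVA adj_VA_b.
have [S' pS' <-] := lam_packing G'.
have [S pS [<- SF]] := transfer S' pS'.
have dbVA : [disjoint b |: VA & gV G' :|: F].
  rewrite disjoint_sym disjoints_subset subUset; apply/andP; split; apply/subsetP => x.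
    rewrite VG' !inE negb_or => /andP[/andP[xVA xX] _]; rewrite negb_or xVA andbT.
    by apply: contraNneq xX => ->.
  by move/(subsetP F12)/set2P => [->|->]; rewrite inE ?z1_out ?z2_out.
have dS P : tverts P \subset b |: VA -> [disjoint tverts P & pverts S].
  by move=> Pb; apply: disjointWl Pb (disjointWr SF dbVA).
exact: lam_add2 pS P1G P2G d12 (dS _ P1b) (dS _ P2b).
Qed.

Lemma adj_b_out x : adj G b x -> x \notin VA -> x \in [set z1; z2].
Proof.
move=> bx xVA; move: bx; rewrite adj_b !inE -orbA => /or3P[/eqP xa|->|->] //.
  by rewrite xa aVA in xVA.
by rewrite orbT.
Qed.

Lemma cut_reduction (X : {set T}) u p v q : b \in X ->
  (forall y x, y \in X -> adj G y x -> x \notin VA :|: X ->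
     (x, y) = (u, p) \/ (x, y) = (v, q)) ->
  forall x y, x \notin VA :|: X -> y \in VA :|: X -> adj G x y ->
    (x, y) = (u, p) \/ (x, y) = (v, q).
Proof.
move=> bX cutX x y xR /setUP[yVA|yX] xy; last by apply: cutX; rewrite // adj_sym.
have /setU1P[xb|xVA] : x \in b |: VA by apply: (subsetP (nbrsVA yVA)); rewrite in_nbrs adj_sym.
  by move: xR; rewrite xb inE bX orbT.
by move: xR; rewrite inE xVA.
Qed.

Local Notation R3 := (VA :|: [set b; z1; z2]).

Lemma nadj_b_neq_z y : ~~ adj G y b -> (y != z1) && (y != z2).
Proof. by move=> yb; apply/andP; split; apply: contraNneq yb => ->; rewrite adj_sym // ?bz1 ?bz2. Qed.

Lemma notin_R3 x : x \notin VA -> x != b -> x != z1 -> x != z2 -> x \notin R3.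
Proof. by move=> xVA xb xz1 xz2; rewrite !inE negb_or xVA /= !negb_or xb xz1 xz2. Qed.

Section ThroughZ.
Variables u v : T.
Hypotheses (Nz1 : nbrs G z1 = [set u; b]) (Nz2 : nbrs G z2 = [set v; b]).
Hypotheses (ub : u != b) (vb : v != b) (uz2 : u != z2) (vz1 : v != z1) (uv : u != v).

Lemma uz1 : adj G u z1. Proof. by rewrite adj_sym // -in_nbrs Nz1 set21. Qed.
Lemma vz2 : adj G v z2. Proof. by rewrite adj_sym // -in_nbrs Nz2 set21. Qed.

Lemma uR : u \notin R3.
Proof.
apply: notin_R3 => //; last exact: adj_neq Gs uz1.
by apply: notin_VA z1_out _; rewrite adj_sym // uz1.
Qed.

Lemma vR : v \notin R3.
Proof.
apply: notin_R3 => //; last exact: adj_neq Gs vz2.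
by apply: notin_VA z2_out _; rewrite adj_sym // vz2.
Qed.

Lemma cut_through_z x y : x \notin R3 -> y \in R3 -> adj G x y ->
  (x, y) = (u, z1) \/ (x, y) = (v, z2).
Proof.
apply: cut_reduction => [|{}y {}x]; first by rewrite !inE eqxx.
rewrite !inE -orbA => /or3P[]/eqP-> yx; rewrite negb_or => /andP[xVA].
- by case/set2P: (adj_b_out yx xVA) => ->; rewrite eqxx ?orbT.
- by move: yx; rewrite -in_nbrs Nz1 => /set2P[]->; [left|rewrite eqxx].
- by move: yx; rewrite -in_nbrs Nz2 => /set2P[]->; [right|rewrite eqxx].
Qed.

Lemma reduce_delete : deg G u = 3 -> deg G v = 3 -> sound_reduction (delv G R3).
Proof.
move=> du dv; have [z1R z2R] : z1 \in R3 /\ z2 \in R3 by rewrite !inE !eqxx !orbT.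
split; first exact: inG32_delv_cut G32 uR vR z1R z2R uz1 vz2 uv cut_through_z du dv.
apply: (lam_reduction (X := [set b; z1; z2])) (packing_transfer_subgraph _) => //.
- by rewrite !inE eqxx.
- exact: sub0set.
- exact: adj_delv.
Qed.

Lemma reduce_join : ~~ adj G u v -> sound_reduction (adde (delv G R3) u v).
Proof.
move=> nuv; have [z1R z2R] : z1 \in R3 /\ z2 \in R3 by rewrite !inE !eqxx !orbT.
have G'32 := inG32_adde_delv_cut G32 uR vR z1R z2R uz1 vz2 uv cut_through_z nuv.
split => //.
apply: (lam_reduction (X := [set b; z1; z2])) (packing_transfer_new_edge G'32.1 uv _ _ _) => //.
- by rewrite !inE eqxx.
- exact: adj_adde_delv.
- by apply: (replace_by_cut_edges Gs uz1 vz2); rewrite /= in_setD ?z1R ?z2R.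
- by rewrite disjoints_subset subUset !sub1set /= !in_setC !in_setD z1R z2R.
Qed.

End ThroughZ.

Lemma reduce_short_short x1 x2 :
  short_path G x1 z1 b -> short_path G x2 z2 b -> x1 != x2 ->
  sound_reduction (delv G R3).
Proof.
move=> /(short_pathP Gs)[[_ x1b _] _ Nz1 dz1 dx1].
move=> /(short_pathP Gs)[[_ x2b _] _ Nz2 dz2 dx2] x12.
exact: reduce_delete Nz1 Nz2 x1b x2b (deg_neq dx1 dz2 isT) (deg_neq dx2 dz1 isT) x12 dx1 dx2.
Qed.

Lemma reduce_long_short x1 y1 x2 :
  long_path G x1 y1 z1 b -> short_path G x2 z2 b -> x1 != x2 ->
  sound_reduction (adde (delv G R3) y1 x2).
Proof.
move=> /(long_pathP Gs)[[_ x1b y1b z1b] _ Ny1 Nz1 [_ dy1 dz1]].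
move=> /(short_pathP Gs)[[_ x2b _] _ Nz2 _ dx2] x12.
have /nadj_b_neq_z/andP[_ y1z2] : ~~ adj G y1 b.
  by rewrite -in_nbrs Ny1 !inE negb_or !(eq_sym b) x1b z1b.
have x2z1 := deg_neq dx2 dz1 isT.
apply: (reduce_join Nz1 Nz2 y1b x2b y1z2 x2z1 (deg_neq dy1 dx2 isT)).
by rewrite -in_nbrs Ny1 !inE negb_or eq_sym x12.
Qed.

Lemma reduce_long_long x1 y1 x2 y2 :
  long_path G x1 y1 z1 b -> long_path G x2 y2 z2 b ->
  sound_reduction (adde (delv G R3) y1 y2).
Proof.
move=> /(long_pathP Gs)[[_ x1b y1b z1b] _ Ny1 Nz1 [dx1 dy1 dz1]].
move=> /(long_pathP Gs)[[_ x2b y2b z2b] _ Ny2 Nz2 [dx2 dy2 dz2]].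
have /nadj_b_neq_z/andP[_ y1z2] : ~~ adj G y1 b.
  by rewrite -in_nbrs Ny1 !inE negb_or !(eq_sym b) x1b z1b.
have /nadj_b_neq_z/andP[y2z1 _] : ~~ adj G y2 b.
  by rewrite -in_nbrs Ny2 !inE negb_or !(eq_sym b) x2b z2b.
have y12 : y1 != y2.
  apply/eqP => E; have : z2 \in nbrs G y1 by rewrite E Ny2 set22.
  by rewrite Ny1 !inE (negbTE (deg_neq dz2 dx1 isT)) eq_sym (negbTE z12).
apply: (reduce_join Nz1 Nz2 y1b y2b y1z2 y2z1 y12).
by rewrite -in_nbrs Ny1 !inE negb_or (deg_neq dy2 dx1 isT) y2z1.
Qed.

Section CommonNeighbour.
Variables (X : {set T}) (s p t q x : T).
Local Notation R := (VA :|: X).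
Hypotheses (bX : b \in X) (Xb : X \subset [set b; z1; z2]).
Hypotheses (sR : s \notin R) (tR : t \notin R) (pR : p \in R) (qR : q \in R).
Hypotheses (sp : adj G s p) (tq : adj G t q) (st : s != t).
Hypothesis cutR : forall y y', y \notin R -> y' \in R -> adj G y y' ->
  (y, y') = (s, p) \/ (y, y') = (t, q).
Hypotheses (sx : adj G s x) (xt : adj G x t).
Hypothesis nbrs_st : nbrs G s :|: nbrs G t \subset x |: R.

Lemma reduce_common_nbr : sound_reduction (adde (delv G R) s t).
Proof.
have nst : ~~ adj G s t.
  apply/negP => adj_st; have : t \in x |: R by apply: (subsetP nbrs_st); rewrite !inE adj_st.
  by case/setU1P => [tx|]; [move: xt; rewrite tx adj_irr | apply/negP].
have G'32 := inG32_adde_delv_cut G32 sR tR pR qR sp tq st cutR nst.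
split => //.
apply: (lam_reduction (X := X) (F := set0)) (packing_transfer_new_edge G'32.1 st _ _ _) => //.
- exact: sub0set.
- exact: adj_adde_delv.
- apply: (replace_by_common_nbr Gs _ sx xt st) => m /setDP[_ mR] msmt.
  have : m \in x |: R by apply: (subsetP nbrs_st); rewrite !inE !(adj_sym s) // !(adj_sym t).
  by case/setU1P => [//|mR']; rewrite mR' in mR.
- by rewrite -setI_eq0 set0I.
Qed.

End CommonNeighbour.

Lemma reduce_short_short_common x :
  short_path G x z1 b -> short_path G x z2 b ->
  sound_reduction (adde (delv G (VA :|: [set b])) z1 z2).
Proof.
move=> /(short_pathP Gs)[[_ _ z1b] xz1 Nz1 _ _] /(short_pathP Gs)[[_ _ z2b] xz2 Nz2 _ _].
have bR : b \in VA :|: [set b] by rewrite !inE eqxx orbT.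
apply: (reduce_common_nbr (p := b) (q := b) (x := x)) => //.
- by rewrite !inE.
- by rewrite sub1set !inE eqxx.
- by rewrite !inE negb_or z1VA z1b.
- by rewrite !inE negb_or z2VA z2b.
- by rewrite adj_sym // bz1.
- by rewrite adj_sym // bz2.
- apply: cut_reduction => [|y' y]; first by rewrite !inE.
  move=> /set1P-> b_y; rewrite !inE negb_or => /andP[yVA _].
  by case/set2P: (adj_b_out b_y yVA) => ->; [left|right].
- by rewrite adj_sym.
- by rewrite Nz1 Nz2 setUid subUset !sub1set !inE !eqxx !orbT.
Qed.

Lemma reduce_long_short_common x y1 :
  long_path G x y1 z1 b -> short_path G x z2 b ->
  sound_reduction (adde (delv G (VA :|: [set b; z1])) y1 z2).
Proof.
move=> /(long_pathP Gs)[[_ xb y1b z1b] xy1 Ny1 Nz1 _].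
move=> /(short_pathP Gs)[[_ _ z2b] xz2 Nz2 _ _].
have z1y1 : adj G z1 y1 by rewrite -in_nbrs Nz1 set21.
have /nadj_b_neq_z/andP[_ y1z2] : ~~ adj G y1 b.
  by rewrite -in_nbrs Ny1 !inE negb_or !(eq_sym b) xb z1b.
apply: (reduce_common_nbr (p := z1) (q := b) (x := x)) => //.
- by rewrite !inE eqxx.
- by rewrite subUset !sub1set !inE !eqxx ?orbT.
- by rewrite !inE negb_or (notin_VA z1_out z1y1) !negb_or y1b eq_sym (adj_neq Gs z1y1).
- by rewrite !inE negb_or z2VA !negb_or z2b eq_sym z12.
- by rewrite !inE !eqxx !orbT.
- by rewrite !inE !eqxx !orbT.
- by rewrite adj_sym.
- by rewrite adj_sym // bz2.
- apply: cut_reduction => [|y' y]; first by rewrite !inE eqxx.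
  rewrite !inE => /orP[]/eqP-> y'y; rewrite negb_or => /andP[yVA].
    by case/set2P: (adj_b_out y'y yVA) => ->; [rewrite eqxx ?orbT|right].
  by move: y'y; rewrite -in_nbrs Nz1 => /set2P[]->; [left|rewrite eqxx].
- by rewrite adj_sym.
- by rewrite Ny1 Nz2 !subUset !sub1set !inE !eqxx !orbT.
Qed.

End Reduction.

Lemma nbrs_side (T : finType) (G A B : sgraph T) (a b : T) :
  [disjoint gV A & gV B] -> b \in gV B ->
  (forall x y, (adj G x y && ~~ ((x == a) && (y == b) || (x == b) && (y == a)))
               = adj A x y || adj B x y) ->
  {in gV A, forall w, nbrs G w \subset b |: gV A}.
Proof.
move=> dAB bB splitG w wA; apply/subsetP => y; rewrite in_nbrs => wy.
have wb : w != b by apply: contraTneq bB => <-; rewrite (disjointFr dAB wA).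
have := splitG w y; rewrite wy (negbTE wb) /= orbF.
case: (boolP ((w == a) && (y == b))) => [/andP[_ /eqP->]|_ /esym/orP[/adj_inr yA|/adj_inl wB]].
- by rewrite !inE eqxx.
- by rewrite !inE yA orbT.
- by rewrite (disjointFr dAB wA) in wB.
Qed.

Theorem lemma3p4 (T : finType) (G A B G' : sgraph T) (a b z1 z2 : T) :
  inG32 G ->
  adj G a b -> deg G a = 3 -> deg G b = 3 ->
  simple A -> simple B -> subgraph A G -> subgraph B G ->
  [disjoint gV A & gV B] ->
  gV G = gV A :|: gV B ->
  (forall x y, (adj G x y && ~~ ((x == a) && (y == b) || (x == b) && (y == a)))
               = adj A x y || adj B x y) ->
  a \in gV A -> b \in gV B ->
  let Ag := SGraph (b |: gV A)
              (fun x y => [|| gE A x y, (x == a) && (y == b) | (x == b) && (y == a)]) in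
  nv Ag = 6 -> lam Ag = 2 ->
  adj B b z1 -> adj B b z2 -> z1 != z2 ->
  ( (exists x1 x2, [/\ short_path G x1 z1 b, short_path G x2 z2 b, x1 != x2 &
        G' = delv G (gV A :|: [set b; z1; z2])]) \/
    (exists x1 x2, [/\ short_path G x1 z1 b, short_path G x2 z2 b, x1 = x2 &
        G' = adde (delv G (gV A :|: [set b])) z1 z2]) \/
    (exists x1 y1 x2, [/\ long_path G x1 y1 z1 b, short_path G x2 z2 b, x1 != x2 &
        G' = adde (delv G (gV A :|: [set b; z1; z2])) y1 x2]) \/
    (exists x1 y1 x2, [/\ long_path G x1 y1 z1 b, short_path G x2 z2 b, x1 = x2 &
        G' = adde (delv G (gV A :|: [set b; z1])) y1 z2]) \/
    (exists x1 y1 x2 y2, [/\ long_path G x1 y1 z1 b, long_path G x2 y2 z2 b &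
        G' = adde (delv G (gV A :|: [set b; z1; z2])) y1 y2]) ) ->
  inG32 G' /\ (nv G' <= 4 * lam G' -> nv G <= 4 * lam G).
Proof.
move=> G32 ab da db _ _ [VAG _] [_ BG] dAB _ splitG aVA bB Ag nAg _ bz1 bz2 z12 cases.
have bVA : b \notin gV A by rewrite (disjointFl dAB bB).
have z1VA : z1 \notin gV A by rewrite (disjointFl dAB (adj_inr bz1)).
have z2VA : z2 \notin gV A by rewrite (disjointFl dAB (adj_inr bz2)).
have cardVA : #|gV A| = 5 by move: nAg; rewrite /nv /= cardsU1 bVA => -[].
have nbrs_b : nbrs G b = [set a; z1; z2].
  apply: nbrs3 => //; [by rewrite adj_sym //; case: G32|exact: BG|exact: BG| |].
  - by apply: contraNneq z1VA => <-.
  - by apply: contraNneq z2VA => <-.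
have nbrsVA := nbrs_side dAB bB splitG.
case: cases => [[x1 [x2 [sp1 sp2 x12 ->]]]|[[x1 [x2 [sp1 sp2 ex ->]]]|
  [[x1 [y1 [x2 [lp1 sp2 x12 ->]]]]|[[x1 [y1 [x2 [lp1 sp2 ex ->]]]]|
  [x1 [y1 [x2 [y2 [lp1 lp2 ->]]]]]]]]].
- by apply: (reduce_short_short (a := a)) sp1 sp2 x12.
- by move: sp2; rewrite -ex => sp2; apply: (reduce_short_short_common (a := a)) sp1 sp2.
- by apply: (reduce_long_short (a := a)) lp1 sp2 x12.
- by move: sp2; rewrite -ex => sp2; apply: (reduce_long_short_common (a := a)) lp1 sp2.
- by apply: (reduce_long_long (a := a)) lp1 lp2.
Qed.
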